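(* Every classically perfect positive definite matrix $Q\in\mathcal{S}^n_{>0}$ is arithmetically equivalent to a perfect copositive matrix: there exists $U\in\mathrm{GL}_n(\mathbb{Z})$ such that $U^\top QU$ is perfect copositive.
   Context: $\mathcal{S}^n$: real symmetric $n\times n$ matrices, $\mathcal{S}^n_{>0}$ the positive definite ones; $B[v]=v^\top Bv$. Classical notions: $\min Q=\min\{Q[v]: v\in\mathbb{Z}^n\setminus\{0\}\}$, $\operatorname{Min}Q=\{v\in\mathbb{Z}^n: Q[v]=\min Q\}$; a positive definite $Q$ is classically perfect if it is the unique $Q'\in\mathcal{S}^n$ with $Q'[v]=\min Q$ for all $v\in\operatorname{Min}Q$. Two symmetric matrices $Q_1,Q_2$ are arithmetically equivalent if $Q_2=U^\top Q_1U$ for some $U\in\mathrm{GL}_n(\mathbb{Z})$. Copositive notions: $\mathcal{COP}^n=\{B\in\mathcal{S}^n: B[x]\ge0\ \forall x\in\mathbb{R}^n_{\ge0}\}$; strictly copositive means lying in its interior; $\min_{\mathcal{COP}}B=\inf\{B[v]: v\in\mathbb{Z}^n_{\ge0}\setminus\{0\}\}$, $\operatorname{Min}_{\mathcal{COP}}B=\{v\in\mathbb{Z}^n_{\ge0}: B[v]=\min_{\mathcal{COP}}B\}$; a strictly copositive $P$ is perfect copositive if it is the unique $Q\in\mathcal{S}^n$ with $Q[v]=\min_{\mathcal{COP}}P$ for all $v\in\operatorname{Min}_{\mathcal{COP}}P$. *)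

From HB Require Import structures.
From mathcomp Require Import all_boot all_order all_algebra.
From mathcomp Require Import all_classical all_reals.
Set Implicit Arguments. Unset Strict Implicit. Unset Printing Implicit Defensive.
Import Order.TTheory GRing.Theory Num.Theory.
Local Open Scope ring_scope.
Local Open Scope classical_set_scope.

Section Defs.
Variables (R : realType) (n : nat).

Definition qf (B : 'M[R]_n) (v : 'cV[R]_n) : R := (v^T *m B *m v) 0 0.

Definition symmetric (B : 'M[R]_n) : Prop := B^T = B.

Definition zvec (z : 'cV[int]_n) : 'cV[R]_n := map_mx (fun k : int => k%:~R) z.
Definition nvec (z : 'cV[nat]_n) : 'cV[R]_n := map_mx (fun k : nat => k%:R) z.

Definition posdef (Q : 'M[R]_n) : Prop :=
  symmetric Q /\ forall x : 'cV[R]_n, x != 0 -> 0 < qf Q x.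

Definition minQ (Q : 'M[R]_n) : R :=
  inf [set qf Q (zvec z) | z in [set z : 'cV[int]_n | z != 0]].
Definition MinQ (Q : 'M[R]_n) : set 'cV[int]_n :=
  [set z | qf Q (zvec z) = minQ Q].

Definition classically_perfect (Q : 'M[R]_n) : Prop :=
  posdef Q /\
  forall Q' : 'M[R]_n, symmetric Q' ->
    (forall z, MinQ Q z -> qf Q' (zvec z) = minQ Q) -> Q' = Q.

(* copositive cone and its interior (in S^n, entrywise max-norm topology) *)
Definition copositive (B : 'M[R]_n) : Prop :=
  symmetric B /\ forall x : 'cV[R]_n, (forall i, 0 <= x i 0) -> 0 <= qf B x.

Definition strictly_copositive (B : 'M[R]_n) : Prop :=
  symmetric B /\
  exists2 eps : R, 0 < eps &
    forall C : 'M[R]_n, symmetric C ->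
      (forall i j, `|C i j - B i j| < eps) -> copositive C.

Definition minCOP (B : 'M[R]_n) : R :=
  inf [set qf B (nvec z) | z in [set z : 'cV[nat]_n | z != 0]].
Definition MinCOP (B : 'M[R]_n) : set 'cV[nat]_n :=
  [set z | qf B (nvec z) = minCOP B].

Definition perfect_copositive (P : 'M[R]_n) : Prop :=
  strictly_copositive P /\
  forall Q : 'M[R]_n, symmetric Q ->
    (forall z, MinCOP P z -> qf Q (nvec z) = minCOP P) -> Q = P.

Definition intmx (U : 'M[int]_n) : 'M[R]_n := map_mx (fun k : int => k%:~R) U.

End Defs.

From Pilot Require Import Defs.
From mathcomp Require Import all_boot all_order all_algebra.
From mathcomp Require Import all_classical all_reals.
From mathcomp Require Import zify ring lra.
Import Order.TTheory GRing.Theory Num.Theory.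
Local Open Scope ring_scope.

(* Let Q be classically perfect with minimum m > 0.
   1. A positive definite matrix is strictly copositive: with a
      Cauchy-Schwarz bound (sum_i x_i)^2 <= K Q[x], every symmetric
      C with |C_ij - Q_ij| < 1/(K+1) stays copositive.
   2. The same bound applied to the coordinate functionals shows that
      the minimal vectors of Q have bounded coordinates, |v_i| < B.
   3. A product V of two integral transvections maps v to
      (t, v_1 + B t, ..., v_(n-1) + B t) with t = sum_j B^j v_j; for
      v <> 0 with |v_j| < B, t <> 0 (base-B digits), so V v is
      sign-definite: all its coordinates have the sign of t.
   4. Transfer: if V is unimodular with inverse U and sends every
      minimal vector of Q to a sign-definite vector, P = U^T Q U is
      perfect copositive: P is positive definite, its copositive
      minimum is m and is attained at |V v| for v minimal, and a
      symmetric Q' agreeing with m on these vectors makes V^T Q' V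
      agree with m on Min Q, hence V^T Q' V = Q and Q' = P.
   The theorem combines 2, 3 and 4 (dimension 0 being trivial). *)

Section BilinearForm.
Context {R : realType} {n : nat}.
Implicit Types (B C P : 'M[R]_n) (x y c : 'cV[R]_n).

Definition bil B x y : R := (x^T *m B *m y) 0 0.

Lemma qf_bil B x : qf B x = bil B x x. Proof. by []. Qed.

Lemma bil_sum B x y : bil B x y = \sum_i \sum_j x i 0 * B i j * y j 0.
Proof.
rewrite /bil mxE exchange_big /=; apply: eq_bigr => j _.
by rewrite mxE big_distrl /=; apply: eq_bigr => i _; rewrite mxE.
Qed.

Lemma bilC B x y : Defs.symmetric B -> bil B x y = bil B y x.
Proof.
move=> sB; rewrite !bil_sum exchange_big /=; apply: eq_bigr => i _.
by apply: eq_bigr => j _; rewrite -{1}sB mxE; ring.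
Qed.

Lemma bilDl B x x' y : bil B (x + x') y = bil B x y + bil B x' y.
Proof. by rewrite /bil linearD /= !mulmxDl mxE. Qed.

Lemma bilDr B x y y' : bil B x (y + y') = bil B x y + bil B x y'.
Proof. by rewrite /bil !mulmxDr mxE. Qed.

Lemma bilZl B a x y : bil B (a *: x) y = a * bil B x y.
Proof. by rewrite /bil linearZ /= -!scalemxAl mxE. Qed.

Lemma bilZr B a x y : bil B x (a *: y) = a * bil B x y.
Proof. by rewrite /bil -!scalemxAr mxE. Qed.

Lemma bilDm B C x y : bil (B + C) x y = bil B x y + bil C x y.
Proof. by rewrite /bil mulmxDr mulmxDl mxE. Qed.

Lemma qf0 B : qf B 0 = 0.
Proof. by rewrite /qf mulmx0 mxE. Qed.

Lemma qfN B x : qf B (- x) = qf B x.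
Proof. by rewrite -scaleN1r !qf_bil bilZl bilZr; ring. Qed.

Lemma qf_conj (A B : 'M[R]_n) x : qf (A^T *m B *m A) x = qf B (A *m x).
Proof. by rewrite /qf trmx_mul !mulmxA. Qed.

Lemma symmetric_conj (A B : 'M[R]_n) :
  Defs.symmetric B -> Defs.symmetric (A^T *m B *m A).
Proof. by move=> sB; rewrite /Defs.symmetric !trmx_mul trmxK sB mulmxA. Qed.

Lemma qf_lin B a b x y : Defs.symmetric B ->
  qf B (a *: x + b *: y) =
  a ^+ 2 * qf B x + 2 * a * b * bil B x y + b ^+ 2 * qf B y.
Proof.
move=> sB; rewrite !qf_bil !(bilDl, bilDr, bilZl, bilZr) (bilC B y x sB); ring.
Qed.

Lemma posdef_ge0 B x : posdef B -> 0 <= qf B x.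
Proof. by case=> _ pB; have [->|/pB/ltW //] := eqVneq x 0; rewrite qf0. Qed.

Lemma cauchy_schwarz B x y : posdef B -> bil B y x ^+ 2 <= qf B y * qf B x.
Proof.
move=> pB; have [->|y0] := eqVneq y 0.
  by rewrite qf0 mul0r /bil linear0 !mul0mx mxE expr0n.
have cy := pB.2 _ y0; rewrite (bilC B y x pB.1).
have := posdef_ge0 B (qf B y *: x + (- bil B x y) *: y) pB.
rewrite qf_lin; last exact: pB.1.
set c := qf B y; set a := qf B x; set b := bil B x y => h.
have : 0 <= c * (c * a - b ^+ 2).
  by have -> : c * (c * a - b ^+ 2) = c ^+ 2 * a + 2 * c * - b * b + (- b) ^+ 2 * c
    by ring.
by rewrite pmulr_rge0 // subr_ge0.
Qed.

Lemma posdef_unit B : posdef B -> B \in unitmx.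
Proof.
move=> [sB pB]; rewrite -row_free_unit -kermx_eq0; apply/eqP/row_matrixP => i.
rewrite row0; set r := row i (kermx B).
have rB : r *m B = 0 by rewrite /r -row_mul mulmx_ker row0.
apply/eqP/negPn/negP => r0.
have /pB : r^T != 0 by rewrite -(inj_eq (@trmx_inj _ _ _)) trmxK linear0.
by rewrite /qf trmxK rB !mul0mx mxE ltxx.
Qed.

Lemma bil_invmx B c x : posdef B -> bil B (invmx B *m c) x = (c^T *m x) 0 0.
Proof.
move=> pB; rewrite /bil trmx_mul trmx_inv (proj1 pB) -(mulmxA c^T).
by rewrite mulVmx ?mulmx1 //; exact: posdef_unit.
Qed.

Lemma functional_sq_le B c x : posdef B ->
  (c^T *m x) 0 0 ^+ 2 <= qf B (invmx B *m c) * qf B x.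
Proof. by move=> pB; rewrite -(bil_invmx B c x pB); exact: cauchy_schwarz. Qed.

Lemma coord_sq_le B : posdef B ->
  exists K, forall x i, x i 0 ^+ 2 <= K * qf B x.
Proof.
move=> pB; exists (\sum_i qf B (invmx B *m delta_mx i 0)) => x i.
have -> : x i 0 = ((delta_mx i 0 : 'cV[R]_n)^T *m x) 0 0.
  by rewrite trmx_delta -rowE !mxE.
apply: le_trans (functional_sq_le B (delta_mx i 0) x pB) _; apply: ler_wpM2r.
    exact: posdef_ge0.
by rewrite (bigD1 i) //= lerDl sumr_ge0 // => j _; exact: posdef_ge0.
Qed.

Lemma perturbation_ge B C eps x :
  (forall i j, `|C i j - B i j| < eps) -> (forall i, 0 <= x i 0) ->
  - (eps * (\sum_i x i 0) ^+ 2) <= qf (C - B) x.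
Proof.
move=> hC x0; rewrite qf_bil bil_sum expr2 mulr_suml mulr_sumr -sumrN.
apply: ler_sum => i _; rewrite mulr_sumr mulr_sumr -sumrN.
apply: ler_sum => j _; have := hC i j; rewrite !mxE ltr_norml => /andP[h1 h2].
have : 0 <= x i 0 * x j 0 by rewrite mulr_ge0.
nra.
Qed.

Lemma posdef_strictly_copositive P : posdef P -> strictly_copositive P.
Proof.
move=> pP; split; first exact: pP.1.
set one := const_mx 1 : 'cV[R]_n; set K := qf P (invmx P *m one) + 1.
have K0 : 0 < K by have := posdef_ge0 P (invmx P *m one) pP; rewrite /K; lra.
exists K^-1; first by rewrite invr_gt0.
move=> C sC hC; split => // x x0.
have eK : K^-1 * K = 1 by rewrite mulVf // gt_eqF.
have hs : (one^T *m x) 0 0 = \sum_i x i 0.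
  by rewrite mxE; apply: eq_bigr => j _; rewrite !mxE mul1r.
have cs := functional_sq_le P one x pP; rewrite hs in cs.
have hD := perturbation_ge P C (K^-1) x hC x0.
have qx := posdef_ge0 P x pP.
have -> : C = P + (C - P) by rewrite addrC subrK.
rewrite qf_bil bilDm -!qf_bil.
have : (\sum_i x i 0) ^+ 2 <= K * qf P x by rewrite /K; nra.
nra.
Qed.

End BilinearForm.

Section IntegerVectors.
Context {R : realType} {n : nat}.

Lemma intmxM (A B : 'M[int]_n) : intmx R (A *m B) = intmx R A *m intmx R B.
Proof. exact: map_mxM. Qed.

Lemma intmx1 : intmx R (1%:M : 'M[int]_n) = 1%:M.
Proof. exact: map_mx1. Qed.

Lemma zvecM (A : 'M[int]_n) z : zvec R (A *m z) = intmx R A *m zvec R z.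
Proof. exact: map_mxM. Qed.

Lemma zvec0 : zvec R (0 : 'cV[int]_n) = 0.
Proof. by apply/matrixP => i j; rewrite !mxE. Qed.

Lemma zvec_eq0 (z : 'cV[int]_n) : (zvec R z == 0) = (z == 0).
Proof.
apply/eqP/eqP => [/matrixP h|->]; last exact: zvec0.
by apply/matrixP => i j; have /eqP := h i j; rewrite !mxE intr_eq0 => /eqP.
Qed.

Lemma unimodular_neq0 (U V : 'M[int]_n) (z : 'cV[int]_n) :
  V *m U = 1%:M -> z != 0 -> U *m z != 0.
Proof.
move=> VU; apply: contraNneq => Uz0.
by rewrite -(mul1mx z) -VU -mulmxA Uz0 mulmx0.
Qed.

Definition sign_definite (v : 'cV[int]_n) : Prop :=
  (forall i, 0 <= v i 0) \/ (forall i, v i 0 <= 0).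

Definition absv (v : 'cV[int]_n) : 'cV[nat]_n := map_mx absz v.

Lemma absv_neq0 v : v != 0 -> absv v != 0.
Proof.
apply: contraNneq => h; apply/eqP/matrixP => i j.
by have /matrixP/(_ i j) := h; rewrite !mxE => /eqP; rewrite absz_eq0 => /eqP.
Qed.

Lemma nvec_absv v : sign_definite v ->
  nvec R (absv v) = zvec R v \/ nvec R (absv v) = - zvec R v.
Proof.
case=> h; [left|right]; apply/matrixP => i j; rewrite !ord1 !mxE natr_absz.
  by rewrite ger0_norm.
by rewrite ler0_norm // mulrNz.
Qed.

Lemma qf_absv (B : 'M[R]_n) v : sign_definite v ->
  qf B (nvec R (absv v)) = qf B (zvec R v).
Proof. by case/nvec_absv => ->; rewrite ?qfN. Qed.

Lemma nvec_posz (z : 'cV[nat]_n) : nvec R z = zvec R (map_mx Posz z).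
Proof. by apply/matrixP => i j; rewrite !mxE. Qed.

Lemma posz_neq0 (z : 'cV[nat]_n) : z != 0 -> map_mx Posz z != 0.
Proof.
apply: contraNneq => /matrixP h; apply/eqP/matrixP => i j.
by have := h i j; rewrite !mxE; case.
Qed.

End IntegerVectors.

Lemma base_digits_eq0 (M : int) d (f : nat -> int) : (forall k, `|f k| < M) ->
  \sum_(k < d) M ^+ k * f k = 0 -> forall k, (k < d)%N -> f k = 0.
Proof.
elim: d f => [//|d IH] f hf.
rewrite big_ord_recl /= expr0 mul1r.
under eq_bigr do rewrite exprS -mulrA.
rewrite -mulr_sumr; set S := \sum_(i < d) _ => h.
have M0 : 0 < M by apply: le_lt_trans (hf 0%N).
have S0 : S = 0.
  apply/eqP/negPn/negP => nS.
  have : `|f 0%N| = M * `|S|.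
    have -> : f 0%N = - (M * S) by apply/eqP; rewrite -addr_eq0 h.
    by rewrite normrN normrM gtr0_norm.
  have := hf 0%N; have S1 : 1 <= `|S| by rewrite -gtz0_ge1 normr_gt0.
  nia.
have f0 : f 0%N = 0 by move: h; rewrite S0 mulr0 addr0.
by case=> [//|k] hk; apply: (IH (fun k => f k.+1)).
Qed.

Lemma transvection_inv (R : comNzRingType) m (a b : 'cV[R]_m) : b^T *m a = 0 ->
  (1%:M + a *m b^T) *m (1%:M - a *m b^T) = 1%:M.
Proof.
move=> ba; rewrite mulmxDl mul1mx mulmxBr mulmx1 -!mulmxA (mulmxA b^T) ba.
by rewrite mul0mx mulmx0 subr0 subrK.
Qed.

Section Encoding.
Variables (n' : nat) (Bd : int).
Local Notation n := n'.+1.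

Definition e0 : 'cV[int]_n := delta_mx 0 0.
Definition tail_ones : 'cV[int]_n := const_mx 1 - e0.
Definition base_powers : 'cV[int]_n := \col_j (Bd ^+ j).

(* pack replaces v_0 by sum_j Bd^j v_j; lift adds Bd v_0 to the other entries *)
Definition pack : 'M[int]_n := 1%:M + e0 *m (base_powers - e0)^T.
Definition unpack : 'M[int]_n := 1%:M - e0 *m (base_powers - e0)^T.
Definition lift : 'M[int]_n := 1%:M + (Bd *: tail_ones) *m e0^T.
Definition unlift : 'M[int]_n := 1%:M - (Bd *: tail_ones) *m e0^T.

Definition encode : 'M[int]_n := lift *m pack.
Definition decode : 'M[int]_n := unpack *m unlift.

Lemma e0T_mul (x : 'cV[int]_n) : e0^T *m x = (x 0 0)%:M.
Proof. by apply/matrixP => i j; rewrite !ord1 /e0 trmx_delta -rowE !mxE. Qed.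

Lemma encode_decode : encode *m decode = 1%:M.
Proof.
have pack_inv : pack *m unpack = 1%:M.
  apply: transvection_inv; apply/matrixP => i j.
  by rewrite !ord1 /e0 -colE !mxE /= expr0 mulr1n subrr.
have lift_inv : lift *m unlift = 1%:M.
  apply: transvection_inv; rewrite e0T_mul !mxE /= mulr1n subrr mulr0.
  by apply/matrixP => i j; rewrite !mxE mul0rn.
by rewrite /encode /decode mulmxA -(mulmxA lift) pack_inv mulmx1 lift_inv.
Qed.

Lemma decode_encode : decode *m encode = 1%:M.
Proof. exact: mulmx1C encode_decode. Qed.

Lemma encode_entry (v : 'cV[int]_n) i :
  (encode *m v) i 0 = if i == 0 then \sum_(j < n) Bd ^+ j * v j 0
                      else v i 0 + Bd * \sum_(j < n) Bd ^+ j * v j 0.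
Proof.
rewrite /encode -mulmxA /lift /pack !mulmxDl !mul1mx -!mulmxA e0T_mul.
set t := \sum_(j < n) _.
have -> : (base_powers - e0)^T *m v = (t - v 0 0)%:M.
  rewrite linearB /= mulmxBl e0T_mul; apply/matrixP => a b.
  rewrite !ord1 !mxE /= mulr1n; congr (_ - _).
  by apply: eq_bigr => j _; rewrite !mxE.
rewrite !mul_mx_scalar !mxE /= eqxx /= mulr1n andbT.
by case: eqP => [->|_] /=; [rewrite mulr1n | rewrite mulr0n]; ring.
Qed.

(* All entries of encode v carry the sign of its first entry, which is
   nonzero because v has base-Bd digits not all zero. *)
Lemma encode_sign_definite (v : 'cV[int]_n) :
  v != 0 -> (forall j, `|v j 0| < Bd) -> sign_definite (encode *m v).
Proof.
move=> v0 hb; set t := \sum_(j < n) Bd ^+ j * v j 0.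
have t0 : t != 0.
  apply: contraNneq v0 => ht; apply/eqP/matrixP => j l; rewrite ord1 mxE.
  have := @base_digits_eq0 Bd n (fun k => v (inord k) 0) (fun k => hb _).
  have -> : \sum_(k < n) Bd ^+ k * v (inord k) 0 = t.
    by apply: eq_bigr => i _; rewrite inord_val.
  by move=> /(_ ht j (ltn_ord j)); rewrite inord_val.
have [tp|tn] : 1 <= t \/ t <= -1 by lia.
  by left => i; rewrite encode_entry -/t; case: eqP => _; have := hb i; nia.
by right => i; rewrite encode_entry -/t; case: eqP => _; have := hb i; nia.
Qed.

End Encoding.

Section MinimalVectors.
Context {R : realType} {n : nat} (Q : 'M[R]_n).
Hypothesis pdQ : posdef Q.

Lemma minQ_le z : z != 0 -> minQ Q <= qf Q (zvec R z).
Proof.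
move=> z0; apply: ge_inf; last by exists z.
by exists 0 => _ [y _ <-]; exact: posdef_ge0.
Qed.

Variable z0 : 'cV[int]_n.
Hypotheses (z0_neq0 : z0 != 0) (z0_min : MinQ Q z0).

Lemma minQ_gt0 : 0 < minQ Q.
Proof. by rewrite -z0_min; apply: pdQ.2; rewrite zvec_eq0. Qed.

Lemma minvec_neq0 z : MinQ Q z -> z != 0.
Proof.
apply: contraPneq => ->; rewrite /MinQ /= zvec0 qf0 => m0.
by have := minQ_gt0; rewrite -m0 ltxx.
Qed.

Lemma minvec_bounded :
  exists Bd : nat, forall z, MinQ Q z -> forall j, `|z j 0| < Bd%:Z.
Proof.
have [K hK] := coord_sq_le Q pdQ.
exists (Num.Def.archi_bound `|K * minQ Q|) => z zmin j.
have := hK (zvec R z) j; rewrite zmin mxE => hz.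
rewrite -(ltr_int R) intr_norm.
apply: le_lt_trans (archi_boundP (normr_ge0 _)).
apply: le_trans (ler_norm _); apply: le_trans hz.
rewrite -real_normK ?realz //; apply: intr_ler_sqr.
by rewrite -intr_norm intr_int.
Qed.

End MinimalVectors.

(* In positive dimension a classically perfect form has a nonzero
   minimal vector: otherwise the zero form would satisfy all the
   minimal-vector conditions and hence equal Q. *)
Lemma classically_perfect_minvec {R : realType} {n : nat} (Q : 'M[R]_n.+1) :
  classically_perfect Q -> exists2 z, z != 0 & MinQ Q z.
Proof.
case=> pdQ perf; apply: contrapT => hN.
have Q0 : 0 = Q.
  apply: perf => [|z zmin]; first by rewrite /Defs.symmetric linear0.
  have z0 : z = 0 by apply: contrapT => /eqP nz; apply: hN; exists z.
  by rewrite -zmin z0 zvec0 !qf0.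
have /pdQ.2 : (delta_mx 0 0 : 'cV[R]_n.+1) != 0.
  by apply/eqP => /matrixP /(_ 0 0) /eqP; rewrite !mxE eqxx oner_eq0.
by rewrite -Q0 /qf mulmx0 mul0mx mxE ltxx.
Qed.

Section Transfer.
Context {R : realType} {n : nat} (Q : 'M[R]_n) (U V : 'M[int]_n).
Hypotheses (cpQ : classically_perfect Q) (VU : V *m U = 1%:M) (UV : U *m V = 1%:M).
Variable z0 : 'cV[int]_n.
Hypotheses (z0_neq0 : z0 != 0) (z0_min : MinQ Q z0).
Hypothesis V_sign : forall v, MinQ Q v -> sign_definite (V *m v).

Local Notation P := ((intmx R U)^T *m Q *m intmx R U).

Lemma qf_conj_zvec z : qf P (zvec R z) = qf Q (zvec R (U *m z)).
Proof. by rewrite qf_conj zvecM. Qed.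

Lemma qf_conj_encode v : qf P (zvec R (V *m v)) = qf Q (zvec R v).
Proof. by rewrite qf_conj_zvec mulmxA UV mul1mx. Qed.

Lemma posdef_conj : posdef P.
Proof.
split; first exact/symmetric_conj/cpQ.1.1.
move=> x x0; rewrite qf_conj; apply: cpQ.1.2; apply: contraNneq x0 => Ux0.
by rewrite -(mul1mx x) -intmx1 -VU intmxM -mulmxA Ux0 mulmx0.
Qed.

(* The copositive minimum of P is the classical minimum of Q, attained
   at |V v| for every minimal vector v of Q. *)
Lemma minCOP_conj : minCOP P = minQ Q.
Proof.
set E := [set qf P (nvec R z) | z in [set z : 'cV[nat]_n | z != 0]]%classic.
have lbE : lbound E (minQ Q).
  move=> _ [z zn <-]; rewrite nvec_posz qf_conj_zvec.
  by apply: (minQ_le Q cpQ.1); apply: (unimodular_neq0 U V _ VU); exact: posz_neq0.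
have Em : E (minQ Q).
  exists (absv (V *m z0)); first exact/absv_neq0/(unimodular_neq0 V U _ UV).
  by rewrite qf_absv ?qf_conj_encode //; exact: V_sign.
apply/eqP; rewrite eq_le (ge_inf (ex_intro _ _ lbE) Em) /=.
by apply: lb_le_inf; [exists (minQ Q) | exact: lbE].
Qed.

Lemma absv_encode_min v : MinQ Q v -> MinCOP P (absv (V *m v)).
Proof.
by move=> vmin; rewrite /MinCOP /= minCOP_conj qf_absv ?qf_conj_encode //; exact: V_sign.
Qed.

Lemma conj_perfect_copositive : perfect_copositive P.
Proof.
split; first exact/posdef_strictly_copositive/posdef_conj.
move=> Q' sQ' hQ'; set UR := intmx R U; set VR := intmx R V.
have VUR : VR *m UR = 1%:M by rewrite -intmxM VU intmx1.
have back : VR^T *m Q' *m VR = Q.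
  apply: cpQ.2 => [|v vmin]; first exact: symmetric_conj.
  rewrite qf_conj -zvecM -(qf_absv _ _ (V_sign _ vmin)).
  by rewrite hQ' ?minCOP_conj //; exact: absv_encode_min.
by rewrite -back !mulmxA -trmx_mul VUR trmx1 mul1mx -mulmxA VUR mulmx1.
Qed.

End Transfer.

Lemma perfect_copositive_dim0 {R : realType} (P : 'M[R]_0) : perfect_copositive P.
Proof.
split; last by move=> Q' _ _; rewrite !thinmx0.
apply: posdef_strictly_copositive; split; first by rewrite /Defs.symmetric !thinmx0.
by move=> x; rewrite flatmx0 eqxx.
Qed.

Theorem theorem6p1 (R : realType) (n : nat) (Q : 'M[R]_n) :
  classically_perfect Q ->
  exists2 U : 'M[int]_n, U \in unitmx &
    perfect_copositive ((intmx R U)^T *m Q *m intmx R U).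
Proof.
case: n Q => [|n'] Q cpQ.
  by exists 1%:M; [exact: unitmx1 | exact: perfect_copositive_dim0].
have [z0 z0_neq0 z0_min] := classically_perfect_minvec Q cpQ.
have [Bd bounded] := minvec_bounded Q cpQ.1.
exists (decode n' Bd); first exact: (mulmx1_unit (decode_encode n' Bd)).1.
apply: (conj_perfect_copositive Q _ _ cpQ (encode_decode n' Bd)
          (decode_encode n' Bd) _ z0_neq0 z0_min) => v vmin.
apply: (encode_sign_definite _ _ _ _ (bounded v vmin)).
exact: (minvec_neq0 Q cpQ.1 z0 z0_neq0 z0_min).
Qed.
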